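(* Let $t\ge 2$, $k\ge 1$, and let $C$ be a binary linear $t$-CIS $[tk,k]$ code with generator matrix $G=(A_1\ A_2\ \cdots\ A_t)$, where each $A_j$ is an invertible $k\times k$ matrix over $\mathbb{F}_2$; let $A_j(\mathbf r_i)$ denote the $i$-th row of $A_j$. Let $\mathbf x_1,\dots,\mathbf x_t\in\mathbb{F}_2^k$ and $y_{ij}\in\mathbb{F}_2$ ($1\le i\le k$, $1\le j\le t$) be arbitrary. For each $j$, let $c_{1j},\dots,c_{kj}\in\mathbb{F}_2$ be the unique elements with $\mathbf x_j=\sum_{i=1}^k c_{ij}A_j(\mathbf r_i)$, and set $z_j=1+\sum_{i=1}^k c_{ij}y_{ij}$. Then the $(k+1)\times t(k+1)$ matrix $$G_1=\begin{pmatrix} z_1 & \mathbf x_1 & z_2 & \mathbf x_2 & \cdots & z_t & \mathbf x_t\\ y_{11} & A_1(\mathbf r_1) & y_{12} & A_2(\mathbf r_1) & \cdots & y_{1t} & A_t(\mathbf r_1)\\ \vdots & \vdots & \vdots & \vdots & & \vdots & \vdots\\ y_{k1} & A_1(\mathbf r_k) & y_{k2} & A_2(\mathbf r_k) & \cdots & y_{kt} & A_t(\mathbf r_k)\end{pmatrix}$$ generates a binary linear $t$-CIS $[t(k+1),k+1]$ code.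
   Context: A binary linear $[tk,k]$ code is $t$-CIS if its coordinate set can be partitioned into $t$ pairwise disjoint information sets, an information set being a set of $k$ coordinates whose columns in a generator matrix are linearly independent. *)

From HB Require Import structures.
From mathcomp Require Import all_boot all_order all_algebra.
Set Implicit Arguments. Unset Strict Implicit. Unset Printing Implicit Defensive.
Import GRing.Theory.
Local Open Scope ring_scope.

(* Binary linear codes are given by a generator matrix over 'F_2; the code is
   the row space.  Coordinates are the column indices 'I_n. *)

Definition cols_of (k n : nat) (G : 'M['F_2]_(k, n)) (S : {set 'I_n})
  : 'M['F_2]_(k, #|S|) := colsub (fun i : 'I_#|S| => enum_val i) G.

Definition info_set (k n : nat) (G : 'M['F_2]_(k, n)) (S : {set 'I_n}) : bool :=
  (#|S| == k) && (\rank (cols_of G S) == #|S|).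

(* G (k x t*k) generates a binary linear [t k, k] code (i.e. G has rank k)
   which is t-CIS: the coordinate set is partitioned (via a block-assignment
   map P) into t pairwise disjoint information sets. *)
Definition is_tCIS (t k : nat) (G : 'M['F_2]_(k, t * k)) : Prop :=
  \rank G = k /\
  exists P : 'I_(t * k) -> 'I_t,
    forall j : 'I_t, info_set G [set p | P p == j].

(* The matrix (A_1 A_2 ... A_t), blocks placed side by side. *)
Definition concat_blocks (t k : nat) (A : 'I_t -> 'M['F_2]_k) : 'M['F_2]_(k, t * k) :=
  \matrix_(i < k) mxvec (\matrix_(j < t, l < k) A j i l).

(* The matrix G_1 of the statement: block j is the (k+1) x (k+1) matrix
   [ z_j  x_j ; y_{.j}  A_j ]. *)
Definition ext_block (t k : nat) (A : 'I_t -> 'M['F_2]_k) (x : 'I_t -> 'rV['F_2]_k)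
  (y : 'I_k -> 'I_t -> 'F_2) (z : 'I_t -> 'F_2) (j : 'I_t) (i l : 'I_k.+1) : 'F_2 :=
  match unlift ord0 i, unlift ord0 l with
  | None, None => z j
  | None, Some l' => x j ord0 l'
  | Some i', None => y i' j
  | Some i', Some l' => A j i' l'
  end.

Definition G1_matrix (t k : nat) (A : 'I_t -> 'M['F_2]_k) (x : 'I_t -> 'rV['F_2]_k)
  (y : 'I_k -> 'I_t -> 'F_2) (z : 'I_t -> 'F_2) : 'M['F_2]_(k.+1, t * k.+1) :=
  \matrix_(i < k.+1) mxvec (\matrix_(j < t, l < k.+1) ext_block A x y z j i l).

From HB Require Import structures.
From mathcomp Require Import all_boot all_order all_algebra.
Import GRing.Theory.
Local Open Scope ring_scope.

(* Each block of G_1 has the shape [[1 + c y, c A], [y, A]]; subtracting c times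
   the lower rows from the top row leaves [[1, 0], [y, A]], so every block is
   invertible.  A matrix made of t invertible k x k blocks is t-CIS, the blocks
   themselves giving the t disjoint information sets. *)

Lemma rank_colsub_le (F : fieldType) (m n n' : nat) (g : 'I_n' -> 'I_n)
    (M : 'M[F]_(m, n)) :
  (\rank (colsub g M) <= \rank M)%N.
Proof.
have -> : colsub g M = M *m colsub g 1%:M by rewrite mulmx_colsub mulmx1.
exact: mxrankM_maxl.
Qed.

Lemma unitmx_block_rowcomb (F : fieldType) (k : nat) (A : 'M[F]_k)
    (c : 'rV[F]_k) (y : 'cV[F]_k) :
  A \in unitmx -> block_mx (1%:M + c *m y) (c *m A) y A \in unitmx.
Proof.
move=> unitA.
have reduced : block_mx 1%:M (- c) 0 1%:M *m block_mx (1%:M + c *m y) (c *m A) y A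
               = block_mx 1%:M 0 y A.
  by rewrite mulmx_block !mul1mx !mul0mx !add0r !mulNmx addrK subrr.
have : block_mx 1%:M 0 y A \in unitmx by rewrite unitmxE det_lblock det1 mul1r -unitmxE.
by rewrite -reduced unitmx_mul => /andP[].
Qed.

Section ConcatBlocks.
Variables (t n : nat) (B : 'I_t -> 'M['F_2]_n).

Definition block_of (p : 'I_(t * n)) : 'I_t :=
  (enum_val (cast_ord (esym (mxvec_cast t n)) p)).1.

Definition offset_of (p : 'I_(t * n)) : 'I_n :=
  (enum_val (cast_ord (esym (mxvec_cast t n)) p)).2.

Lemma block_of_mxvec_index j l : block_of (mxvec_index j l) = j.
Proof. by rewrite /block_of /mxvec_index cast_ordK enum_rankK. Qed.

Lemma offset_of_mxvec_index j l : offset_of (mxvec_index j l) = l.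
Proof. by rewrite /offset_of /mxvec_index cast_ordK enum_rankK. Qed.

Lemma block_of_fibreE j :
  [set p | block_of p == j] = [set mxvec_index j l | l : 'I_n].
Proof.
apply/setP => p; case/mxvec_indexP: p => j' l; rewrite inE block_of_mxvec_index.
apply/eqP/imsetP => [-> | [l' _ /(congr1 block_of)]]; first by exists l.
by rewrite !block_of_mxvec_index.
Qed.

Lemma card_block_of_fibre j : #|[set p | block_of p == j]| = n.
Proof.
rewrite block_of_fibreE card_imset ?card_ord // => a b /(congr1 offset_of).
by rewrite !offset_of_mxvec_index.
Qed.

Lemma colsub_concat_blocks j : colsub (mxvec_index j) (concat_blocks B) = B j.
Proof. by apply/matrixP => i l; rewrite !mxE mxvecE mxE. Qed.

Lemma mxvec_index_in_fibre j l : mxvec_index j l \in [set p | block_of p == j].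
Proof. by rewrite inE block_of_mxvec_index. Qed.

Lemma rank_block_le_cols_of j :
  (\rank (B j) <= \rank (cols_of (concat_blocks B) [set p | block_of p == j]))%N.
Proof.
pose g l := enum_rank_in (mxvec_index_in_fibre j l) (mxvec_index j l).
have -> : B j = colsub g (cols_of (concat_blocks B) [set p | block_of p == j]).
  rewrite -colsub_concat_blocks /cols_of -colsub_comp; apply: eq_colsub => l /=.
  by rewrite /g enum_rankK_in // mxvec_index_in_fibre.
exact: rank_colsub_le.
Qed.

Lemma concat_blocks_tCIS :
  (0 < t)%N -> (forall j, B j \in unitmx) -> is_tCIS (concat_blocks B).
Proof.
move=> t_gt0 unitB; have rkB j : \rank (B j) = n by apply: mxrank_unit.
split.
  apply/eqP; rewrite eqn_leq rank_leq_row /= -{1}(rkB (Ordinal t_gt0)).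
  by rewrite -colsub_concat_blocks rank_colsub_le.
exists block_of => j; apply/andP; split; first by rewrite card_block_of_fibre.
by rewrite eqn_leq rank_leq_col /= {1}card_block_of_fibre -{1}(rkB j) rank_block_le_cols_of.
Qed.

End ConcatBlocks.

Lemma lift0_rshift (k : nat) (i : 'I_k) : lift ord0 i = rshift 1 i :> 'I_(1 + k).
Proof. by apply: val_inj. Qed.

Lemma ord0_lshift (k : nat) : (ord0 : 'I_k.+1) = lshift k (ord0 : 'I_1).
Proof. by apply: val_inj. Qed.

Lemma ext_block_mxE (t k : nat) (A : 'I_t -> 'M['F_2]_k) (x : 'I_t -> 'rV['F_2]_k)
    (y : 'I_k -> 'I_t -> 'F_2) (z : 'I_t -> 'F_2) (j : 'I_t) :
  (\matrix_(i, l) ext_block A x y z j i l : 'M_(1 + k))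
  = block_mx (z j)%:M (x j) (\col_i y i j) (A j).
Proof.
apply/matrixP => i l; rewrite mxE /ext_block.
case: (unliftP ord0 i) => [i'|] ->; case: (unliftP ord0 l) => [l'|] ->;
  rewrite ?liftK ?unlift_none.
- by rewrite !lift0_rshift block_mxEdr.
- by rewrite lift0_rshift (ord0_lshift k) block_mxEdl mxE.
- by rewrite lift0_rshift (ord0_lshift k) block_mxEur (ord1 ord0).
- by rewrite (ord0_lshift k) block_mxEul mxE eqxx.
Qed.

Theorem proposition5 (t k : nat) (ht : (2 <= t)%N) (hk : (1 <= k)%N)
  (A : 'I_t -> 'M['F_2]_k)
  (hA : forall j, A j \in unitmx)
  (hC : is_tCIS (concat_blocks A))
  (x : 'I_t -> 'rV['F_2]_k) (y : 'I_k -> 'I_t -> 'F_2)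
  (c : 'I_t -> 'rV['F_2]_k)
  (hc : forall j, x j = \sum_(i < k) c j ord0 i *: row i (A j))
  (z : 'I_t -> 'F_2)
  (hz : forall j, z j = 1 + \sum_(i < k) c j ord0 i * y i j) :
  is_tCIS (G1_matrix A x y z).
Proof.
pose Bj j : 'M['F_2]_k.+1 := \matrix_(i, l) ext_block A x y z j i l.
have -> : G1_matrix A x y z = concat_blocks Bj.
  by apply/matrixP => i p; rewrite !mxE; case/mxvec_indexP: p => j l; rewrite !mxvecE !mxE.
apply: concat_blocks_tCIS; first exact: leq_trans ht.
move=> j; rewrite /Bj ext_block_mxE.
have -> : x j = c j *m A j by rewrite hc mulmx_sum_row.
have -> : (z j)%:M = 1%:M + c j *m \col_i y i j.
  rewrite (mx11_scalar (_ *m _)) -raddfD /= hz !mxE.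
  by under [in RHS]eq_bigr do rewrite mxE.
exact: unitmx_block_rowcomb.
Qed.
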